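(* Let $\boldsymbol{B}\in\mathbb{R}^{d\times d}$ be a fixed positive definite matrix with eigenvalues $\beta_1,\dots,\beta_d\ge0$, and let $c$ be a positive constant with $c\le\operatorname{tr}(\boldsymbol{B})$. Over positive definite matrices $\boldsymbol{G}\in\mathbb{R}^{d\times d}$ with $\operatorname{tr}(\boldsymbol{G})=c$, the minimum of $\operatorname{tr}(\boldsymbol{G}^{-1}\boldsymbol{B})+\ln\det(\boldsymbol{G})$ is achieved at $\boldsymbol{G}=\boldsymbol{O}^\top\operatorname{Diag}(\alpha_1^*,\dots,\alpha_d^* )\boldsymbol{O}$, where $\boldsymbol{O}$ is any orthogonal matrix with $\boldsymbol{B}=\boldsymbol{O}^\top\operatorname{Diag}(\beta_1,\dots,\beta_d)\boldsymbol{O}$, $$\alpha_i^*=\frac{\sqrt{1-4\lambda^*\beta_i}-1}{-2\lambda^*},$$ and $\lambda^*\le0$ is the unique solution of $\sum_{i=1}^d\frac{2\beta_i}{1+\sqrt{1-4\lambda^*\beta_i}}=c$. *)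

From HB Require Import structures.
From mathcomp Require Import all_boot all_order all_algebra.
From mathcomp Require Import all_classical all_reals exp.
Set Implicit Arguments. Unset Strict Implicit. Unset Printing Implicit Defensive.
Import Order.TTheory GRing.Theory Num.Theory.
Local Open Scope ring_scope.

Definition posdef (R : realType) (d : nat) (A : 'M[R]_d) : Prop :=
  A^T = A /\ forall x : 'rV[R]_d, x != 0 -> 0 < (x *m A *m x^T) 0 0.

Definition orthogonal_mx (R : realType) (d : nat) (O : 'M[R]_d) : Prop :=
  O *m O^T = 1%:M /\ O^T *m O = 1%:M.

Definition objective (R : realType) (d : nat) (B G : 'M[R]_d) : R :=
  \tr (invmx G *m B) + ln (\det G).

Definition lam_eq_lhs (R : realType) (d : nat) (beta : 'rV[R]_d) (lam : R) : R :=
  \sum_(i < d) (2 * beta 0 i) / (1 + Num.sqrt (1 - 4 * lam * beta 0 i)).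

(* alpha_i^* = (sqrt(1 - 4 lam beta_i) - 1) / (-2 lam); at lam = 0 (the case
   c = tr B) the formula is 0/0 and we take its limit value beta_i. *)
Definition alpha_star (R : realType) (lam b : R) : R :=
  if lam == 0 then b else (Num.sqrt (1 - 4 * lam * b) - 1) / (- 2 * lam).

Definition Gstar (R : realType) (d : nat) (O : 'M[R]_d) (beta : 'rV[R]_d) (lam : R)
  : 'M[R]_d :=
  O^T *m diag_mx (\row_i alpha_star lam (beta 0 i)) *m O.

From HB Require Import structures.
From mathcomp Require Import all_boot all_order all_algebra.
From mathcomp Require Import all_classical all_reals exp.
From mathcomp Require Import topology normedtype realfun.
From mathcomp Require Import ring lra.
Import Order.TTheory GRing.Theory Num.Theory.
Import numFieldNormedType.Exports.
Local Open Scope ring_scope.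
Set Implicit Arguments. Unset Strict Implicit. Unset Printing Implicit Defensive.

(* Rotating by [O] reduces everything to [B = Diag beta].  For [G > 0] put
   [K = G^-1] and [a_i = 1 / K_ii].  Then [tr (G^-1 B) = sum_i beta_i K_ii],
   Hadamard's inequality for [K] gives [ln det G >= sum_i ln a_i], and
   [G_ii K_ii >= 1] gives [sum_i a_i <= tr G = c].  Hence the objective at [G]
   is at least [sum_i (beta_i / a_i + ln a_i)].  Since [lam <= 0], adding
   [- lam (sum_i a_i - c) >= 0] decouples the coordinates, and
   [a |-> beta_i / a + ln a - lam a] is minimal at its stationary point
   [alpha_i^*], the positive root of [lam a^2 - a + beta_i = 0]; as
   [sum_i alpha_i^* = c], the bound is attained by [Diag alpha^*].  The
   equation for [lam] is solved by the intermediate value theorem, and its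
   left-hand side is strictly increasing in [lam]. *)

(* The rationalised form of [alpha_star], continuous in [lam] also at [lam = 0]. *)
Definition alpha_root (R : realType) (lam b : R) : R :=
  2 * b / (1 + Num.sqrt (1 - 4 * lam * b)).

Section AlphaRoot.
Variable R : realType.
Implicit Types lam b : R.

Lemma alpha_root_gt0 lam b : 0 < b -> 0 < alpha_root lam b.
Proof. by move=> b0; rewrite divr_gt0 ?ltr_wpDr ?sqrtr_ge0 //; lra. Qed.

Lemma alpha_rootP lam b : 4 * lam * b <= 1 ->
  lam * alpha_root lam b ^+ 2 - alpha_root lam b + b = 0.
Proof.
move=> disc; rewrite /alpha_root; set s := Num.sqrt _.
have s2 : s ^+ 2 = 1 - 4 * lam * b by rewrite sqr_sqrtr // subr_ge0.
have s1 : 1 + s != 0 by rewrite gt_eqF // ltr_pwDl ?sqrtr_ge0.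
have -> : lam * (2 * b / (1 + s)) ^+ 2 - 2 * b / (1 + s) + b =
          b * (4 * lam * b - 1 + s ^+ 2) / (1 + s) ^+ 2 by field.
by rewrite s2 (_ : _ - 1 + _ = 0) ?mulr0 ?mul0r //; ring.
Qed.

Lemma alpha_root0 b : alpha_root 0 b = b.
Proof. by rewrite /alpha_root mulr0 mul0r subr0 sqrtr1 mulrAC divff ?mul1r // pnatr_eq0. Qed.

Lemma alpha_star_root lam b : 4 * lam * b <= 1 -> alpha_star lam b = alpha_root lam b.
Proof.
move=> disc; rewrite /alpha_star; case: eqP => [->|/eqP lam0]; first by rewrite alpha_root0.
rewrite /alpha_root; set s := Num.sqrt _.
have s2 : s ^+ 2 = 1 - 4 * lam * b by rewrite sqr_sqrtr // subr_ge0.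
have s1 : 1 + s != 0 by rewrite gt_eqF // ltr_pwDl ?sqrtr_ge0.
have lam2 : - 2 * lam != 0 by rewrite mulf_neq0 // oppr_eq0 pnatr_eq0.
apply/eqP; rewrite eqr_div //; apply/eqP.
have -> : (s - 1) * (1 + s) = s ^+ 2 - 1 by ring.
by rewrite s2; ring.
Qed.

Lemma alpha_root_lt l1 l2 b : 4 * l1 * b < 1 -> l1 < l2 -> 0 < b ->
  alpha_root l1 b < alpha_root l2 b.
Proof.
move=> disc l12 b0.
have denom_gt0 l : 0 < 1 + Num.sqrt (1 - 4 * l * b) by rewrite ltr_pwDl ?sqrtr_ge0.
rewrite /alpha_root ltr_pM2l ?mulr_gt0 // ltf_pV2 ?posrE //.
by rewrite ltrD2l ltr_sqrt ?subr_gt0 // ltrD2l ltrN2 ltr_pM2r // ltr_pM2l.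
Qed.

Lemma alpha_root_le lam b (k : R) : lam < 0 -> 0 < b -> 0 <= k -> b <= - lam * k ^+ 2 ->
  alpha_root lam b <= k.
Proof.
move=> lam0 b0 k0 bk; have a0 := alpha_root_gt0 lam b0.
have disc : 4 * lam * b <= 1 by nra.
have := alpha_rootP disc; set a := alpha_root lam b => Ea.
rewrite leNgt; apply/negP => ka.
have : k ^+ 2 < a ^+ 2 by rewrite ltr_sqr ?nnegrE ?(ltW a0).
nra.
Qed.

Lemma alpha_root_continuous b : continuous (fun lam => alpha_root lam b).
Proof.
move=> x; rewrite /alpha_root.
have sqrt_cont : {for x, continuous (fun l : R => Num.sqrt (1 - 4 * l * b))}.
  apply: continuous_comp (@sqrt_continuous R _).
  apply: cvgB; first exact: cvg_cst.
  by apply: cvgM; [apply: cvgM; [exact: cvg_cst | exact: cvg_id] | exact: cvg_cst].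
apply: cvgM; first exact: cvg_cst.
apply: cvgV; first by rewrite gt_eqF // ltr_pwDl ?sqrtr_ge0.
by apply: cvgD; first exact: cvg_cst.
Qed.

(* [ln al - ln a <= al / a - 1] leaves the gap [- lam (al - a)^2 / a >= 0]. *)
Lemma stationary_point_minimizes lam b al a : lam <= 0 -> 0 < al ->
  lam * al ^+ 2 - al + b = 0 -> 0 < a ->
  b / al + ln al - lam * al <= b / a + ln a - lam * a.
Proof.
move=> lam0 al0 Eal a0.
have ln_concave : ln al - ln a <= al / a - 1.
  rewrite -ln_div ?posrE //.
  have := @le_ln1Dx R (al / a - 1); rewrite [1 + _]addrC subrK; apply.
  have : 0 < al / a by exact: divr_gt0.
  lra.
have -> : b = al - lam * al ^+ 2 by lra.
have gap : (al - lam * al ^+ 2) / a - lam * a - (al / a - 2 * lam * al) =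
           - lam * ((al - a) ^+ 2 / a) by field; rewrite gt_eqF.
have : 0 <= - lam * ((al - a) ^+ 2 / a).
  by rewrite mulr_ge0 ?oppr_ge0 // divr_ge0 ?sqr_ge0 ?ltW.
have -> : (al - lam * al ^+ 2) / al = 1 - lam * al by field; rewrite gt_eqF.
lra.
Qed.

End AlphaRoot.

Section LambdaEquation.
Variables (R : realType) (d : nat) (beta : 'rV[R]_d).

Lemma lam_eq_lhsE lam : lam_eq_lhs beta lam = \sum_i alpha_root lam (beta 0 i).
Proof. by []. Qed.

Lemma lam_eq_lhs0 : lam_eq_lhs beta 0 = \sum_i beta 0 i.
Proof. by rewrite lam_eq_lhsE; apply: eq_bigr => i _; rewrite alpha_root0. Qed.

Lemma lam_eq_lhs_continuous : continuous (lam_eq_lhs beta).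
Proof.
apply: continuous_big => [|i _]; first exact: add_continuous.
exact: alpha_root_continuous.
Qed.

Hypothesis beta_gt0 : forall i, 0 < beta 0 i.

Lemma lam_eq_lhs_lt l1 l2 : (0 < d)%N -> l1 < l2 -> l2 <= 0 ->
  lam_eq_lhs beta l1 < lam_eq_lhs beta l2.
Proof.
move=> d_gt0 l12 l20; rewrite !lam_eq_lhsE; apply: ltr_sum => [|i _].
  by apply/hasP; exists (Ordinal d_gt0); rewrite ?mem_index_enum.
have b_gt0 := beta_gt0 i; apply: alpha_root_lt => //; nra.
Qed.

(* The witness [lam = - (sum_i beta_i + 1) / (c / d)^2] makes every
   [alpha_root lam beta_i <= c / d]. *)
Lemma lam_eq_lhs_le c : (0 < d)%N -> 0 < c ->
  exists2 lam, lam <= 0 & lam_eq_lhs beta lam <= c.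
Proof.
move=> d_gt0 c_gt0; set k := c / d%:R; set T := \sum_i beta 0 i.
have k_gt0 : 0 < k by rewrite divr_gt0 ?ltr0n.
have T_ge0 : 0 <= T by rewrite sumr_ge0 // => i _; exact/ltW.
have lam_lt0 : - ((T + 1) / k ^+ 2) < 0.
  by rewrite oppr_lt0 divr_gt0 ?exprn_gt0 ?ltr_wpDl.
exists (- ((T + 1) / k ^+ 2)); first exact: ltW.
rewrite lam_eq_lhsE; apply: le_trans (_ : \sum_(i < d) k <= c).
  apply: ler_sum => i _; apply: alpha_root_le lam_lt0 (beta_gt0 i) (ltW k_gt0) _.
  rewrite opprK divfK ?expf_neq0 ?gt_eqF //.
  suff : beta 0 i <= T by lra.
  by rewrite /T (bigD1 i) //= lerDl sumr_ge0 // => j _; exact/ltW.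
by rewrite sumr_const card_ord -mulr_natr divfK ?pnatr_eq0 -?lt0n.
Qed.

Lemma lam_eq_lhs_unique c : 0 < c -> c <= \sum_i beta 0 i ->
  exists! lam : R, lam <= 0 /\ lam_eq_lhs beta lam = c.
Proof.
move=> c_gt0 cT.
have d_gt0 : (0 < d)%N.
  by case: d beta beta_gt0 cT => // ? _; rewrite big_ord0; lra.
have [lam0 lam0_le0 f_lam0] := lam_eq_lhs_le d_gt0 c_gt0.
have [lam lam_in f_lam] : exists2 lam, lam \in `[lam0, 0] & lam_eq_lhs beta lam = c.
  apply: IVT => //; first exact: continuous_subspaceT lam_eq_lhs_continuous.
  by rewrite lam_eq_lhs0 ge_min le_max f_lam0 cT orbT.
have lam_le0 : lam <= 0 by move: lam_in; rewrite in_itv /= => /andP[].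
exists lam; split=> // lam' [lam'_le0 f_lam'].
case: (ltgtP lam lam') => // lt_lam.
- by have := lam_eq_lhs_lt d_gt0 lt_lam lam'_le0; rewrite f_lam f_lam' ltxx.
- by have := lam_eq_lhs_lt d_gt0 lt_lam lam_le0; rewrite f_lam f_lam' ltxx.
Qed.

End LambdaEquation.

Lemma ln_prod (R : realType) (I : finType) (F : I -> R) : (forall i, 0 < F i) ->
  ln (\prod_i F i) = \sum_i ln (F i).
Proof.
move=> F_gt0; suff [] : 0 < \prod_i F i /\ ln (\prod_i F i) = \sum_i ln (F i) by [].
apply: (big_rec2 (fun x y => 0 < x /\ ln x = y)) => [|i x _ _ [x_gt0 <-]].
  by rewrite ln1.
by split; [rewrite mulr_gt0 | rewrite lnM ?posrE].
Qed.

Section PositiveDefinite.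
Variable R : realType.

Lemma qformE n (x y : 'rV[R]_n) (A : 'M[R]_n) :
  (x *m A *m y^T) 0 0 = \sum_i \sum_j x 0 i * A i j * y 0 j.
Proof. by rewrite mxE exchange_big; apply: eq_bigr => j _; rewrite !mxE big_distrl. Qed.

Lemma posdef_qform_ge0 n (A : 'M[R]_n) (x : 'rV[R]_n) :
  posdef A -> 0 <= (x *m A *m x^T) 0 0.
Proof.
case=> _ A_pos; have [->|x_neq0] := eqVneq x 0; last exact/ltW/A_pos.
by rewrite !mul0mx mxE.
Qed.

Lemma posdef_diag_gt0 n (A : 'M[R]_n) (i : 'I_n) : posdef A -> 0 < A i i.
Proof.
case=> _ A_pos; have := A_pos (delta_mx 0 i).
rewrite trmx_delta -rowE -colE !mxE; apply.
by apply/negP => /eqP/matrixP/(_ 0 i); rewrite !mxE !eqxx => /eqP; rewrite oner_eq0.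
Qed.

Lemma posdef_unitmx n (A : 'M[R]_n) : posdef A -> A \in unitmx.
Proof.
case=> _ A_pos; rewrite unitmxE unitfE; apply/negP => /det0P [v v_neq0 vA].
by move: (A_pos v v_neq0); rewrite vA mul0mx mxE ltxx.
Qed.

Lemma posdef_conj n (A Q : 'M[R]_n) :
  posdef A -> Q^T *m Q = 1%:M -> posdef (Q^T *m A *m Q).
Proof.
case=> A_sym A_pos QQ; split; first by rewrite !trmx_mul trmxK A_sym mulmxA.
move=> x x_neq0.
have -> : x *m (Q^T *m A *m Q) *m x^T = (x *m Q^T) *m A *m (x *m Q^T)^T.
  by rewrite trmx_mul trmxK !mulmxA.
apply: A_pos; apply: contra x_neq0 => /eqP xQ; apply/eqP.
by rewrite -[x]mulmx1 -QQ mulmxA xQ mul0mx.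
Qed.

Lemma posdef_invmx n (A : 'M[R]_n) : posdef A -> posdef (invmx A).
Proof.
move=> A_pd; have A_unit := posdef_unitmx A_pd; case: A_pd => A_sym A_pos.
split; first by rewrite trmx_inv A_sym.
move=> x x_neq0.
have -> : x *m invmx A *m x^T = (x *m invmx A) *m A *m (x *m invmx A)^T.
  by rewrite trmx_mul trmx_inv A_sym mulmxA mulmxKV.
apply: A_pos; apply: contra x_neq0 => /eqP xA; apply/eqP.
by rewrite -[x](mulmxKV A_unit) xA mul0mx.
Qed.

Lemma posdef_diag_mx n (a : 'rV[R]_n) : (forall i, 0 < a 0 i) -> posdef (diag_mx a).
Proof.
move=> a_gt0; split; first exact: tr_diag_mx.
move=> x x_neq0; rewrite qformE.
have [i xi_neq0] : exists i, x 0 i != 0.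
  apply/existsP; apply: contraR x_neq0; rewrite negb_exists => /forallP x0.
  by apply/eqP/rowP => j; rewrite mxE; exact/eqP/negPn/x0.
have diagE k : \sum_j x 0 k * diag_mx a k j * x 0 j = a 0 k * x 0 k ^+ 2.
  rewrite (bigD1 k) //= big1 ?addr0 => [|j /negPf jk]; last first.
    by rewrite mxE eq_sym jk mulr0n mulr0 mul0r.
  by rewrite mxE eqxx mulr1n; ring.
under eq_bigr do rewrite diagE.
rewrite (bigD1 i) //=; apply: ltr_pwDl; first by rewrite mulr_gt0 // exprn_even_gt0.
by apply: sumr_ge0 => j _; rewrite mulr_ge0 ?sqr_ge0 // ltW.
Qed.

(* The quadratic form of [A] at [e_i - e_i A^-1 / (A^-1)_ii] equals
   [A_ii - 1 / (A^-1)_ii] and is nonnegative. *)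
Lemma diag_mul_diag_invmx_ge1 n (A : 'M[R]_n) (i : 'I_n) : posdef A ->
  1 <= A i i * (invmx A) i i.
Proof.
move=> A_pd; have A_unit := posdef_unitmx A_pd.
have [K_sym _] := posdef_invmx A_pd.
have m_gt0 : 0 < (invmx A) i i by exact/posdef_diag_gt0/posdef_invmx.
set K := invmx A in K_sym m_gt0 *; set m := K i i in m_gt0 *.
set u : 'rV[R]_n := delta_mx 0 i.
set w := u + (- m^-1) *: (u *m K).
have := posdef_qform_ge0 w A_pd.
have -> : (w *m A *m w^T) 0 0 = A i i - m^-1.
  rewrite /w mulmxDl -scalemxAl mulmxKV // linearD /= linearZ /= trmx_mul K_sym.
  rewrite !mulmxDr -!scalemxAr !mulmxA !mulmxDl -!scalemxAl (mulmxK A_unit).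
  rewrite /u trmx_delta -!rowE -!colE !mxE eqxx /= -/m.
  by field; rewrite gt_eqF.
by rewrite subr_ge0 -(ler_pM2r m_gt0) mulVf ?gt_eqF.
Qed.

Lemma posdef_minor0 n (A : 'M[R]_n.+1) : posdef A -> posdef (row' 0 (col' 0 A)).
Proof.
case=> A_sym A_pos; split.
  apply/matrixP => i j; rewrite !mxE.
  by move/matrixP: A_sym => /(_ (lift 0 j) (lift 0 i)); rewrite !mxE.
move=> x x_neq0.
pose X : 'rV[R]_n.+1 := \row_j (if unlift 0 j is Some k then x 0 k else 0).
have X0 : X 0 0 = 0 by rewrite mxE unlift_none.
have XS k : X 0 (lift 0 k) = x 0 k by rewrite mxE liftK.
have X_neq0 : X != 0.
  apply: contra x_neq0 => /eqP XE; apply/eqP/rowP => k.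
  by rewrite -XS XE !mxE.
have <- : (X *m A *m X^T) 0 0 = (x *m row' 0 (col' 0 A) *m x^T) 0 0.
  rewrite !qformE big_ord_recl X0 big1 ?add0r => [|j _]; last by rewrite !mul0r.
  apply: eq_bigr => k _; rewrite big_ord_recl X0 mulr0 add0r.
  by apply: eq_bigr => l _; rewrite !XS !mxE.
exact: A_pos.
Qed.

(* [(A^-1)_00 = det(minor) / det A] and [A_00 (A^-1)_00 >= 1] give
   [det A <= A_00 det(minor)]. *)
Lemma hadamard_inequality n (A : 'M[R]_n) :
  posdef A -> 0 < \det A /\ \det A <= \prod_i A i i.
Proof.
elim: n A => [|n IHn] A A_pd; first by rewrite det_mx00 big_ord0 ltr01 lexx.
have [minor_gt0 minor_le] := IHn _ (posdef_minor0 A_pd).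
have invA00 : (invmx A) 0 0 = (\det A)^-1 * \det (row' 0 (col' 0 A)).
  by rewrite /invmx posdef_unitmx // !mxE /cofactor addn0 expr0 mul1r.
have det_gt0 : 0 < \det A.
  have := posdef_diag_gt0 0 (posdef_invmx A_pd).
  by rewrite invA00 pmulr_lgt0 // invr_gt0.
split=> //; apply: le_trans (_ : \det A * (A 0 0 * (invmx A) 0 0) <= _).
  by rewrite ler_pMr // diag_mul_diag_invmx_ge1.
rewrite invA00 mulrCA mulVKf ?gt_eqF // big_ord_recl ler_pM2l ?posdef_diag_gt0 //.
by apply: (le_trans minor_le); under eq_bigr do rewrite !mxE.
Qed.

End PositiveDefinite.

Section Objective.
Variable R : realType.

Lemma orthogonal_mx_tr n (O : 'M[R]_n) : orthogonal_mx O -> orthogonal_mx O^T.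
Proof. by case=> OOt OtO; rewrite /orthogonal_mx trmxK. Qed.

Lemma mxtrace_conj n (A O : 'M[R]_n) : orthogonal_mx O -> \tr (O^T *m A *m O) = \tr A.
Proof. by case=> OOt _; rewrite mxtrace_mulC mulmxA OOt mul1mx. Qed.

Lemma det_conj n (A O : 'M[R]_n) : orthogonal_mx O -> \det (O^T *m A *m O) = \det A.
Proof.
case=> _ OtO; have detO2 : \det O * \det O = 1 by rewrite -{1}det_tr -det_mulmx OtO det1.
by rewrite !det_mulmx det_tr mulrAC detO2 mul1r.
Qed.

Lemma mulmx1_invmx n (A B : 'M[R]_n) : A *m B = 1%:M -> invmx A = B.
Proof.
move=> AB; have [A_unit _] := mulmx1_unit AB.
by rewrite -[LHS]mulmx1 -AB mulKmx.
Qed.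

Lemma invmx_conj n (A O : 'M[R]_n) : orthogonal_mx O -> A \in unitmx ->
  invmx (O^T *m A *m O) = O^T *m invmx A *m O.
Proof.
case=> OOt OtO A_unit; apply: mulmx1_invmx.
by rewrite !mulmxA -[_ *m O *m O^T]mulmxA OOt mulmx1 mulmxK // OtO.
Qed.

Lemma objective_conj n (B G O : 'M[R]_n) : orthogonal_mx O -> G \in unitmx ->
  objective (O^T *m B *m O) (O^T *m G *m O) = objective B G.
Proof.
move=> O_orth G_unit; have [OOt _] := O_orth.
rewrite /objective invmx_conj // det_conj //; congr (_ + _).
rewrite -(mxtrace_conj (invmx G *m B) O_orth); congr (\tr _).
by rewrite !mulmxA -[_ *m O *m O^T]mulmxA OOt mulmx1.
Qed.

Lemma objective_diag n (b a : 'rV[R]_n) : (forall i, 0 < a 0 i) ->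
  objective (diag_mx b) (diag_mx a) = \sum_i (b 0 i / a 0 i + ln (a 0 i)).
Proof.
move=> a_gt0; rewrite /objective big_split /= det_diag ln_prod //; congr (_ + _).
have inv_a : invmx (diag_mx a) = diag_mx (\row_i (a 0 i)^-1).
  apply: mulmx1_invmx; apply/matrixP => i j.
  by rewrite mul_diag_mx !mxE mulrnAr mulfV ?(gt_eqF (a_gt0 i)).
rewrite inv_a mulmx_diag mxtrace_diag; apply: eq_bigr => i _.
by rewrite !mxE mulrC.
Qed.

Lemma objective_diag_ge n (b : 'rV[R]_n) (G : 'M[R]_n) : posdef G ->
  \sum_i (b 0 i / ((invmx G) i i)^-1 + ln (((invmx G) i i)^-1)) <= objective (diag_mx b) G.
Proof.
move=> G_pd; have K_pd := posdef_invmx G_pd; set K := invmx G in K_pd *.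
have K_gt0 i : 0 < K i i by exact: posdef_diag_gt0.
have [detK_gt0 detK_le] := hadamard_inequality K_pd.
rewrite /objective big_split /=; apply: lerD.
  by rewrite mul_mx_diag /mxtrace; apply: ler_sum => i _; rewrite invrK mxE mulrC.
have -> : \det G = (\det K)^-1 by rewrite det_inv invrK.
rewrite lnV ?posrE // (eq_bigr (fun i => - ln (K i i))) => [|i _]; last first.
  by rewrite lnV ?posrE.
by rewrite sumrN lerN2 -ln_prod // ler_ln ?posrE ?prodr_gt0.
Qed.

Lemma sum_inv_diag_invmx_le_trace n (G : 'M[R]_n) : posdef G ->
  \sum_i ((invmx G) i i)^-1 <= \tr G.
Proof.
move=> G_pd; apply: ler_sum => i _.
have K_gt0 : 0 < (invmx G) i i by exact/posdef_diag_gt0/posdef_invmx.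
by rewrite -(ler_pM2r K_gt0) mulVf ?gt_eqF ?diag_mul_diag_invmx_ge1.
Qed.

End Objective.

Lemma lagrange_bound (R : realType) n (lam c : R) (b al a : 'I_n -> R) :
  lam <= 0 -> (forall i, 0 < al i) -> (forall i, lam * al i ^+ 2 - al i + b i = 0) ->
  \sum_i al i = c -> (forall i, 0 < a i) -> \sum_i a i <= c ->
  \sum_i (b i / al i + ln (al i)) <= \sum_i (b i / a i + ln (a i)).
Proof.
move=> lam_le0 al_gt0 al_root sum_al a_gt0 sum_a.
have : \sum_i (b i / al i + ln (al i) - lam * al i) <=
       \sum_i (b i / a i + ln (a i) - lam * a i).
  by apply: ler_sum => i _; exact: stationary_point_minimizes.
rewrite !sumrB -!mulr_sumr sum_al.
have : lam * c <= lam * \sum_i a i by rewrite ler_wnM2l.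
lra.
Qed.

Lemma posdef_eigenvalues_gt0 (R : realType) d (B O : 'M[R]_d) (beta : 'rV[R]_d) :
  posdef B -> orthogonal_mx O -> B = O^T *m diag_mx beta *m O ->
  forall i, 0 < beta 0 i.
Proof.
move=> B_pd [OOt _] BE i.
have /(posdef_diag_gt0 i) : posdef (O *m B *m O^T).
  by have := posdef_conj (Q := O^T) B_pd; rewrite trmxK; apply.
by rewrite BE !mulmxA OOt mul1mx -mulmxA OOt mulmx1 mxE eqxx mulr1n.
Qed.

Theorem lemma9 (R : realType) (d : nat) (B O : 'M[R]_d) (beta : 'rV[R]_d) (c : R) :
  posdef B ->
  orthogonal_mx O ->
  B = O^T *m diag_mx beta *m O ->
  0 < c -> c <= \tr B ->
  (exists! lam : R, lam <= 0 /\ lam_eq_lhs beta lam = c) /\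
  (forall lam : R, lam <= 0 -> lam_eq_lhs beta lam = c ->
     posdef (Gstar O beta lam) /\ \tr (Gstar O beta lam) = c /\
     forall G : 'M[R]_d, posdef G -> \tr G = c ->
       objective B (Gstar O beta lam) <= objective B G).
Proof.
move=> B_pd O_orth BE c_gt0 c_le_trB.
have beta_gt0 := posdef_eigenvalues_gt0 B_pd O_orth BE.
have [OOt OtO] := O_orth.
have trB : \tr B = \sum_i beta 0 i by rewrite BE mxtrace_conj // mxtrace_diag.
split=> [|lam lam_le0 f_lam]; first by apply: lam_eq_lhs_unique; rewrite -?trB.
set al := \row_i alpha_root lam (beta 0 i).
have disc i : 4 * lam * beta 0 i <= 1 by have := beta_gt0 i; nra.
have GstarE : Gstar O beta lam = O^T *m diag_mx al *m O.
  by rewrite /Gstar; congr (_ *m diag_mx _ *m _); apply/rowP => i; rewrite !mxE alpha_star_root.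
have al_gt0 i : 0 < al 0 i by rewrite mxE alpha_root_gt0.
have al_pd := posdef_diag_mx al_gt0.
have sum_al : \sum_i al 0 i = c by rewrite -f_lam; apply: eq_bigr => i _; rewrite mxE.
rewrite GstarE mxtrace_conj // mxtrace_diag; split; first exact: posdef_conj.
split=> // G G_pd trG; set G' := O *m G *m O^T.
have G'_pd : posdef G' by have := posdef_conj (Q := O^T) G_pd; rewrite trmxK; apply.
have -> : G = O^T *m G' *m O by rewrite !mulmxA OtO mul1mx -mulmxA OtO mulmx1.
rewrite BE !objective_conj ?posdef_unitmx // objective_diag //.
apply: le_trans (objective_diag_ge beta G'_pd); apply: (lagrange_bound lam_le0 al_gt0 _ sum_al).
- by move=> i; rewrite mxE alpha_rootP.
- by move=> i; rewrite invr_gt0; exact/posdef_diag_gt0/posdef_invmx.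
- by rewrite -trG -(mxtrace_conj G (orthogonal_mx_tr O_orth)) trmxK sum_inv_diag_invmx_le_trace.
Qed.
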